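(* Let $(g,\gamma)$ be a construction pair on an abelian group $(X,+)$. Then $(g^{-1},g\circ\gamma)$ is a construction pair on $(X,+)$, where $(g\circ\gamma)(x,y)=g(\gamma(x,y))$.
   Context: A map $\gamma:X\times X\to X$ is symmetric if $\gamma(x,y)=\gamma(y,x)$, alternating if $\gamma(x,x)=0$, biadditive if additive in each argument. A construction pair on $(X,+)$ is a pair $(g,\gamma)$ where $g$ is a permutation of $X$ and $\gamma:X\times X\to X$ is symmetric, alternating and biadditive, such that for all $x,y,z\in X$: (C1) $g^{-1}(g(x)+g(y))=x+y+\gamma(x,y)+g^{-1}(\gamma(x,y))+g^{-2}(\gamma(x,y))$; (C2) $\gamma(\gamma(x,y),z)=0$; (C3) $g^{-1}(\gamma(x,y))=\gamma(g(x),y)$. *)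

From mathcomp Require Import all_boot all_algebra.
Set Implicit Arguments. Unset Strict Implicit. Unset Printing Implicit Defensive.
Import GRing.Theory.
Local Open Scope ring_scope.

(* A permutation g of X is represented by the function g together with its
   two-sided inverse gi (gi = g^{-1}). *)
Definition is_inverse (X : Type) (g gi : X -> X) : Prop :=
  cancel g gi /\ cancel gi g.

Definition symmetric_map (X : zmodType) (gam : X -> X -> X) : Prop :=
  forall x y, gam x y = gam y x.

Definition alternating_map (X : zmodType) (gam : X -> X -> X) : Prop :=
  forall x, gam x x = 0.

Definition biadditive (X : zmodType) (gam : X -> X -> X) : Prop :=
  (forall x y z, gam (x + y) z = gam x z + gam y z) /\
  (forall x y z, gam x (y + z) = gam x y + gam x z).

Definition construction_pair (X : zmodType) (g gi : X -> X)
    (gam : X -> X -> X) : Prop :=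
  is_inverse g gi /\
  symmetric_map gam /\ alternating_map gam /\ biadditive gam /\
  (forall x y, gi (g x + g y) = x + y + gam x y + gi (gam x y) + gi (gi (gam x y))) /\
  (forall x y z, gam (gam x y) z = 0) /\
  (forall x y, gi (gam x y) = gam (g x) y).

From mathcomp Require Import all_boot all_algebra.
Set Implicit Arguments. Unset Strict Implicit. Unset Printing Implicit Defensive.
Import GRing.Theory.
Local Open Scope ring_scope.

(* The radical of [gam] (the w with [gam w _ = 0]) contains every value of
   [gam] by (C2) and is stable under [g] and [g^{-1}] by (C3).  Axiom (C1)
   then says that [g^{-1}], hence [g], is additive as soon as one summand lies
   in the radical; and [gam] takes values of order 2, being alternating and
   symmetric.  Biadditivity of [g o gam] follows at once, and (C1) for the new
   pair is obtained by applying [g^{-1}] to it and expanding with (C1): the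
   extra terms cancel in pairs. *)

Section ConstructionPairInverse.

Variables (X : zmodType) (g gi : X -> X) (gam : X -> X -> X).

Hypotheses (gK : cancel g gi) (giK : cancel gi g).
Hypothesis gamC : forall x y, gam x y = gam y x.
Hypothesis gamxx : forall x, gam x x = 0.
Hypothesis gamDl : forall x y z, gam (x + y) z = gam x z + gam y z.
Hypothesis gamDr : forall x y z, gam x (y + z) = gam x y + gam x z.
Hypothesis gi_addg : forall x y,
  gi (g x + g y) = x + y + gam x y + gi (gam x y) + gi (gi (gam x y)).
Hypothesis gam_gaml : forall x y z, gam (gam x y) z = 0.
Hypothesis gi_gam : forall x y, gi (gam x y) = gam (g x) y.

Definition in_radical (w : X) : Prop := forall z, gam w z = 0.

Lemma gam0l y : gam 0 y = 0.
Proof.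
by apply: (@addrI _ (gam 0 y)); rewrite addr0 -gamDl addr0.
Qed.

Lemma gam_twice0 x y : gam x y + gam x y = 0.
Proof.
have := gamxx (x + y).
by rewrite gamDl !gamDr !gamxx add0r addr0 [gam y x]gamC.
Qed.

Lemma gi0 : gi 0 = 0.
Proof. by have := gi_gam 0 0; rewrite gam0l gamC gam0l. Qed.

Lemma gam_gl x y : gam (g x) y = gam x (g y).
Proof. by rewrite -gi_gam gamC gi_gam gamC. Qed.

Lemma gam_gil x y : gam (gi x) y = gam x (gi y).
Proof. by rewrite -{1}(giK y) -gam_gl giK. Qed.

Lemma g_gam x y : g (gam x y) = gam (gi x) y.
Proof. by rewrite -{1}(giK x) -gi_gam giK. Qed.

Lemma radical_gam x y : in_radical (gam x y).
Proof. exact: gam_gaml. Qed.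

Lemma radical_g w : in_radical w -> in_radical (g w).
Proof. by move=> rw z; rewrite gam_gl. Qed.

Lemma radical_gi w : in_radical w -> in_radical (gi w).
Proof. by move=> rw z; rewrite gam_gil. Qed.

Lemma gi_addr_radical u v : in_radical v -> gi (u + v) = gi u + gi v.
Proof.
move=> rv; rewrite -{1}(giK u) -{1}(giK v) gi_addg.
by rewrite gamC radical_gi // gi0 gi0 !addr0.
Qed.

Lemma g_addr_radical u v : in_radical v -> g (u + v) = g u + g v.
Proof.
move=> rv; apply: (can_inj giK).
by rewrite gi_addr_radical ?gK //; apply: radical_g.
Qed.

Lemma g0 : g 0 = 0.
Proof. by rewrite -{1}gi0 giK. Qed.

Lemma g_gam_addl x y z : g (gam (x + y) z) = g (gam x z) + g (gam y z).
Proof. by rewrite gamDl g_addr_radical //; apply: radical_gam. Qed.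

Lemma g_gam_addr x y z : g (gam x (y + z)) = g (gam x y) + g (gam x z).
Proof. by rewrite gamDr g_addr_radical //; apply: radical_gam. Qed.

Lemma g_addgi x y :
  g (gi x + gi y) = x + y + g (gam x y) + g (g (gam x y)) + g (g (g (gam x y))).
Proof.
apply: (can_inj giK); rewrite gK.
rewrite -(giK x) -(giK y); move: (gi x) (gi y) => {x y} a b.
(* [g (gam (g a) (g b))] is [gi c] for [c := gam a b] *)
rewrite g_gam gK -gam_gl -gi_gam giK !gK.
set c := gam a b.
have rc : in_radical c by apply: radical_gam.
rewrite (gi_addr_radical _ (radical_g rc)) (gi_addr_radical _ rc).
rewrite (gi_addr_radical _ (radical_gi rc)) gi_addg gK.
rewrite /c !gi_gam.
rewrite -(addrA _ _ (gam (g (g a)) b)) gam_twice0 addr0.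
rewrite -(addrA _ _ (gam (g a) b)) gam_twice0 addr0.
by rewrite -(addrA _ _ (gam a b)) gam_twice0 addr0.
Qed.

End ConstructionPairInverse.

Theorem mainTheorem19 (X : zmodType) (g gi : X -> X) (gam : X -> X -> X) :
  construction_pair g gi gam ->
  construction_pair gi g (fun x y => g (gam x y)).
Proof.
move=> [[gK giK] [gamC [gamxx [[gamDl gamDr] [gi_addg [gam_gaml gi_gam]]]]]].
split; first by [].
split; first by move=> x y; rewrite gamC.
split; first by move=> x; rewrite gamxx; exact: g0.
split; first by split=> x y z /=; [exact: (g_gam_addl gK) | exact: (g_gam_addr gK)].
split; first by move=> x y; exact: (g_addgi gK).
split; first by move=> x y z /=; rewrite (gam_gl gamC gi_gam) gam_gaml; exact: g0.
by move=> x y; rewrite (g_gam giK gi_gam).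
Qed.
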